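(* Let $G=(V,E)$ be a connected graph and $\Theta:E\to[0,\pi/2]$. Suppose that $P$ is a disk pattern in $\mathbb{C}$ which realizes $(G,\Theta)$. If $P$ is locally finite in $\mathbb{C}$, then $G$ is VEL-parabolic.
   Context: A disk pattern in $\mathbb{C}$ is a collection of closed round disks in $\mathbb{C}$ in which no disk has its boundary contained in the union of two other disks and no disk is the Hausdorff limit of a sequence of distinct disks. Its contact graph has one vertex per disk, with an edge when the disks intersect. The dihedral angle of two intersecting disks $D_1,D_2$ is the angle in $[0,\pi)$ between the clockwise tangent of $\partial D_1$ and the counterclockwise tangent of $\partial D_2$ at a point of $\partial D_1\cap\partial D_2$. Let $\tilde G$ be obtained from $G$ by adding the edge $[v_1,v_3]$ (if not present) whenever $v_0,v_1,v_2,v_3$ form a simple loop with $\Theta([v_{i-1},v_i])=\pi/2$, $i=1,\dots,4$ ($v_4=v_0$), and $\Theta([v_0,v_2])=0$; $\tilde\Theta=\Theta$ on $E$ and $0$ on added edges. A pattern $P=\{P(v)\}_{v\in V}$ realizes $(G,\Theta)$ if its contact graph is (via $v\mapsto P(v)$) isomorphic to $\tilde G$ with dihedral angles $\tilde\Theta$. Locally finite in $\mathbb{C}$: each compact subset of $\mathbb{C}$ meets only finitely many disks. Vertex extremal length: a vertex metric is $\eta:V\to[0,\infty)$, with area $\sum_v\eta(v)^2$; a vertex curve $\gamma\subseteq V$ has length $\sum_{v\in\gamma}\eta(v)$. For a family $\Gamma$ of vertex curves, $\eta$ is admissible if every $\gamma\in\Gamma$ has length $\ge1$; $\mathrm{MOD}(\Gamma)$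 is the infimum of areas of admissible metrics and $\mathrm{VEL}(\Gamma)=1/\mathrm{MOD}(\Gamma)$ ($+\infty$ if $\Gamma$ is empty). A path is a finite or infinite sequence of vertices with consecutive ones adjacent in $G$, identified with its vertex set. For nonvoid $V_1$, a path joining $V_1$ and $\infty$ starts at a vertex of $V_1$ and passes through infinitely many vertices; $\mathrm{VEL}(V_1,\infty)$ is the VEL of the family of such paths. A connected graph is VEL-parabolic if $\mathrm{VEL}(V_0,\infty)=\infty$ for a (equivalently any) finite nonvoid $V_0\subseteq V$. *)

From Stdlib Require Import Reals List Classical ClassicalEpsilon.
From Coquelicot Require Import Rbar Lub.
Open Scope R_scope.

Definition pt := (R * R)%type.

Definition dist2 (z w : pt) : R :=
  sqrt ((fst z - fst w) ^ 2 + (snd z - snd w) ^ 2).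

Definition open2 (O : pt -> Prop) : Prop :=
  forall z, O z -> exists eps, 0 < eps /\ forall w, dist2 z w < eps -> O w.

Definition compact2 (K : pt -> Prop) : Prop :=
  forall (I : Type) (U : I -> pt -> Prop),
    (forall i, open2 (U i)) ->
    (forall z, K z -> exists i, U i z) ->
    exists l : list I, forall z, K z -> exists i, In i l /\ U i z.

(* Closed round disks: a center and a radius (the radius is required
   to be positive in [disk_pattern]).                                 *)
Record disk := Disk { dcenter : pt; dradius : R }.

Definition in_disk (D : disk) (z : pt) : Prop := dist2 z (dcenter D) <= dradius D.
Definition on_circle (D : disk) (z : pt) : Prop := dist2 z (dcenter D) = dradius D.

Definition disks_meet (D1 D2 : disk) : Prop := exists z, in_disk D1 z /\ in_disk D2 z.

Definition cw_tangent (D : disk) (z : pt) : pt :=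
  ((snd z - snd (dcenter D)) / dradius D, - (fst z - fst (dcenter D)) / dradius D).
Definition ccw_tangent (D : disk) (z : pt) : pt :=
  (- (snd z - snd (dcenter D)) / dradius D, (fst z - fst (dcenter D)) / dradius D).

Definition dot (u w : pt) : R := fst u * fst w + snd u * snd w.

(* [dihedral_angle D1 D2 th]: th in [0,pi) is the angle between the clockwise
   unit tangent of bd D1 and the counterclockwise unit tangent of bd D2 at a
   point of bd D1 /\ bd D2 (angle between unit vectors u,w in [0,pi] is the
   unique th with cos th = u.w). *)
Definition dihedral_angle (D1 D2 : disk) (th : R) : Prop :=
  0 <= th < PI /\
  exists z, on_circle D1 z /\ on_circle D2 z /\
            cos th = dot (cw_tangent D1 z) (ccw_tangent D2 z).

Definition hausdorff_cvg (A : nat -> pt -> Prop) (B : pt -> Prop) : Prop :=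
  forall eps, 0 < eps -> exists N, forall n, (N <= n)%nat ->
    (forall x, A n x -> exists y, B y /\ dist2 x y < eps) /\
    (forall y, B y -> exists x, A n x /\ dist2 x y < eps).

(* Disk patterns, given as an indexed family P : V -> disk (the collection
   is the image of P).                                                   *)
Definition disk_pattern {V : Type} (P : V -> disk) : Prop :=
  (forall v, 0 < dradius (P v)) /\
  (forall v w1 w2, P w1 <> P v -> P w2 <> P v ->
     ~ (forall z, on_circle (P v) z -> in_disk (P w1) z \/ in_disk (P w2) z)) /\
  (forall v (s : nat -> V),
     (forall m n, m <> n -> P (s m) <> P (s n)) ->
     ~ hausdorff_cvg (fun n => in_disk (P (s n))) (in_disk (P v))).

Definition simple_graph {V : Type} (adj : V -> V -> Prop) : Prop :=
  (forall u v, adj u v -> adj v u) /\ (forall v, ~ adj v v).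

Inductive gpath {V : Type} (adj : V -> V -> Prop) : V -> V -> Prop :=
| gpath_refl : forall v, gpath adj v v
| gpath_step : forall u v w, adj u v -> gpath adj v w -> gpath adj u w.

Definition connected_graph {V : Type} (adj : V -> V -> Prop) : Prop :=
  forall u v, gpath adj u v.

(* Theta : E -> R, given on ordered pairs, symmetric on edges *)
Definition edge_weight {V : Type} (adj : V -> V -> Prop) (Th : V -> V -> R) : Prop :=
  forall u v, adj u v -> Th u v = Th v u.

(* The augmented graph G~ : add [v1,v3] when v0 v1 v2 v3 is a simple loop with
   all four angles pi/2 and [v0,v2] is an edge with angle 0. *)
Definition added_edge {V : Type} (adj : V -> V -> Prop) (Th : V -> V -> R)
  (v1 v3 : V) : Prop :=
  exists v0 v2,
    v0 <> v1 /\ v0 <> v2 /\ v0 <> v3 /\ v1 <> v2 /\ v1 <> v3 /\ v2 <> v3 /\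
    adj v0 v1 /\ adj v1 v2 /\ adj v2 v3 /\ adj v3 v0 /\
    Th v0 v1 = PI / 2 /\ Th v1 v2 = PI / 2 /\ Th v2 v3 = PI / 2 /\ Th v3 v0 = PI / 2 /\
    adj v0 v2 /\ Th v0 v2 = 0.

Definition adjt {V : Type} (adj : V -> V -> Prop) (Th : V -> V -> R) (u v : V) : Prop :=
  adj u v \/ added_edge adj Th u v.

Definition Tht {V : Type} (adj : V -> V -> Prop) (Th : V -> V -> R) (u v : V) : R :=
  match excluded_middle_informative (adj u v) with
  | left _ => Th u v
  | right _ => 0
  end.

(* P realizes (G,Theta): v |-> P v is an isomorphism from G~ onto the contact
   graph of P, with dihedral angles Theta~. *)
Definition realizes {V : Type} (adj : V -> V -> Prop) (Th : V -> V -> R)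
  (P : V -> disk) : Prop :=
  (forall u v, P u = P v -> u = v) /\
  (forall u v, u <> v -> (disks_meet (P u) (P v) <-> adjt adj Th u v)) /\
  (forall u v, adjt adj Th u v -> dihedral_angle (P u) (P v) (Tht adj Th u v)).

Definition finite_set {V : Type} (S : V -> Prop) : Prop :=
  exists l : list V, forall v, S v -> In v l.

Definition locally_finite {V : Type} (P : V -> disk) : Prop :=
  forall K, compact2 K -> finite_set (fun v => exists z, K z /\ in_disk (P v) z).

Definition sum_over {V : Type} (S : V -> Prop) (f : V -> R) : Rbar :=
  Lub_Rbar (fun s => exists l : list V,
    NoDup l /\ (forall v, In v l -> S v) /\
    s = fold_right (fun v acc => f v + acc) 0 l).

Definition vertex_metric {V : Type} (eta : V -> R) : Prop := forall v, 0 <= eta v.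

Definition area {V : Type} (eta : V -> R) : Rbar :=
  sum_over (fun _ => True) (fun v => eta v ^ 2).

(* a vertex curve is a set of vertices *)
Definition vlength {V : Type} (eta : V -> R) (gam : V -> Prop) : Rbar :=
  sum_over gam eta.

Definition admissible {V : Type} (Gam : (V -> Prop) -> Prop) (eta : V -> R) : Prop :=
  vertex_metric eta /\ forall gam, Gam gam -> Rbar_le (Finite 1) (vlength eta gam).

Definition MOD {V : Type} (Gam : (V -> Prop) -> Prop) : Rbar :=
  Glb_Rbar (fun a => exists eta, admissible Gam eta /\ area eta = Finite a).

(* VEL = 1/MOD, with 1/0 = +oo and 1/(+oo) = 0; VEL = +oo if Gam is empty *)
Definition VEL {V : Type} (Gam : (V -> Prop) -> Prop) : Rbar :=
  match excluded_middle_informative (exists gam, Gam gam) with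
  | right _ => p_infty
  | left _ =>
    match MOD Gam with
    | Finite m =>
        match Req_dec_T m 0 with
        | left _ => p_infty
        | right _ => Finite (/ m)
        end
    | p_infty => Finite 0
    | m_infty => p_infty
    end
  end.

Definition infinite_set {V : Type} (S : V -> Prop) : Prop := ~ finite_set S.

Definition paths_to_infinity {V : Type} (adj : V -> V -> Prop) (V1 : V -> Prop)
  (gam : V -> Prop) : Prop :=
  exists f : nat -> V,
    V1 (f O) /\ (forall n, adj (f n) (f (S n))) /\
    infinite_set (fun v => exists n, f n = v) /\
    (forall v, gam v <-> exists n, f n = v).

Definition VEL_to_infinity {V : Type} (adj : V -> V -> Prop) (V1 : V -> Prop) : Rbar :=
  VEL (paths_to_infinity adj V1).

(* VEL(V0, oo) = oo for every finite nonvoid V0 (equivalent, for connected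
   graphs, to "for some finite nonvoid V0") *)
Definition VEL_parabolic {V : Type} (adj : V -> V -> Prop) : Prop :=
  connected_graph adj /\
  forall V0 : V -> Prop, finite_set V0 -> (exists v, V0 v) ->
    VEL_to_infinity adj V0 = p_infty.

From Stdlib Require Import Reals Lra Lia List Classical ClassicalEpsilon.
From Coquelicot Require Import Rcomplements Rbar Lub Hierarchy Compactness.
Open Scope R_scope.

(* Disks meeting at a dihedral angle at most pi/2 have centres at
   distance at least sqrt (r^2 + r'^2), so every point of the plane lies in at
   most five disks of P.  For the annulus q <= |z| <= 2 q, weight each disk by
   the length of its radial extent inside the annulus divided by 2 q: a path
   from a bounded set to infinity crosses the annulus through overlapping
   disks, so its weights add up to at least 1/2, while bounded multiplicity
   (counted on a fine grid in place of an area comparison) bounds the total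
   squared weight by a constant.  Local finiteness gives scales
   R_0 < R_1 < ... so far apart that no disk meets two of the annuli; the
   average of N of these metrics is admissible with area O(1/N), so the
   modulus of the paths to infinity is 0. *)

Definition indicator (Q : Prop) : R :=
  if excluded_middle_informative Q then 1 else 0.

Lemma indicator_T (Q : Prop) : Q -> indicator Q = 1.
Proof. unfold indicator; destruct excluded_middle_informative; tauto. Qed.

Lemma indicator_F (Q : Prop) : ~ Q -> indicator Q = 0.
Proof. unfold indicator; destruct excluded_middle_informative; tauto. Qed.

Lemma indicator_bounds (Q : Prop) : 0 <= indicator Q <= 1.
Proof. unfold indicator; destruct excluded_middle_informative; lra. Qed.

Lemma indicator_mul_le (Q1 Q2 Q : Prop) : (Q1 -> Q2 -> Q) ->
  indicator Q1 * indicator Q2 <= indicator Q.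
Proof.
  intros H. unfold indicator at 1 2.
  destruct excluded_middle_informative; destruct excluded_middle_informative;
    try (rewrite indicator_T by auto); generalize (indicator_bounds Q); lra.
Qed.

Section ListSums.
Context {A : Type}.

Definition lsum (f : A -> R) (l : list A) : R := fold_right (fun v acc => f v + acc) 0 l.
Arguments lsum : simpl never.

Lemma lsum_nil f : lsum f nil = 0.
Proof. reflexivity. Qed.

Lemma lsum_cons f x l : lsum f (x :: l) = f x + lsum f l.
Proof. reflexivity. Qed.

Lemma lsum_app f l1 l2 : lsum f (l1 ++ l2) = lsum f l1 + lsum f l2.
Proof.
  induction l1 as [|x l1 IH]; simpl app; rewrite ?lsum_nil, ?lsum_cons, ?IH; ring.
Qed.

Lemma lsum_le f g l : (forall v, In v l -> f v <= g v) -> lsum f l <= lsum g l.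
Proof.
  induction l as [|x l IH]; intros H; rewrite ?lsum_nil, ?lsum_cons; [lra|].
  apply Rplus_le_compat; [apply H; now left | apply IH; intros; apply H; now right].
Qed.

Lemma lsum_ext f g l : (forall v, In v l -> f v = g v) -> lsum f l = lsum g l.
Proof.
  intros H; apply Rle_antisym; apply lsum_le; intros v Hv; rewrite (H v Hv); lra.
Qed.

Lemma lsum_const c l : lsum (fun _ => c) l = INR (length l) * c.
Proof.
  induction l as [|x l IH]; rewrite ?lsum_nil, ?lsum_cons, ?length_cons, ?S_INR, ?IH;
    simpl; ring.
Qed.

Lemma lsum_nonneg f l : (forall v, In v l -> 0 <= f v) -> 0 <= lsum f l.
Proof.
  intros H. rewrite <- (Rmult_0_r (INR (length l))), <- lsum_const.
  now apply lsum_le.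
Qed.

Lemma lsum_scal c f l : lsum (fun v => c * f v) l = c * lsum f l.
Proof. induction l as [|x l IH]; rewrite ?lsum_nil, ?lsum_cons, ?IH; ring. Qed.

Lemma lsum_plus f g l : lsum (fun v => f v + g v) l = lsum f l + lsum g l.
Proof. induction l as [|x l IH]; rewrite ?lsum_nil, ?lsum_cons, ?IH; ring. Qed.

Lemma lsum_indicator (Q : A -> Prop) l :
  lsum (fun v => indicator (Q v)) l =
  INR (length (filter (fun v => if excluded_middle_informative (Q v) then true else false) l)).
Proof.
  induction l as [|x l IH]; rewrite ?lsum_nil, ?lsum_cons; [reflexivity|].
  simpl; unfold indicator at 1; destruct excluded_middle_informative;
    rewrite ?length_cons, ?S_INR, IH; ring.
Qed.

Lemma lsum_sqr_disjoint (x : A -> R) l : NoDup l ->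
  (forall i j, In i l -> In j l -> i <> j -> x i = 0 \/ x j = 0) ->
  lsum x l ^ 2 = lsum (fun i => x i ^ 2) l.
Proof.
  induction l as [|y l IH]; intros Hnd H; rewrite ?lsum_nil, ?lsum_cons; [ring|].
  inversion Hnd as [|? ? Hy Hnd']; subst.
  rewrite <- IH by (auto; intros; apply H; simpl; auto).
  destruct (Req_dec (x y) 0) as [E|E]; [rewrite E; ring|].
  rewrite (lsum_ext x (fun _ => 0)), lsum_const; [ring|].
  intros i Hi. destruct (H i y) as [h|h]; simpl; auto; [congruence | tauto].
Qed.

End ListSums.

Lemma lsum_comm {A B : Type} (g : A -> B -> R) l1 l2 :
  lsum (fun x => lsum (g x) l2) l1 = lsum (fun y => lsum (fun x => g x y) l1) l2.
Proof.
  induction l1 as [|x l1 IH]; rewrite ?lsum_nil, ?lsum_cons.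
  - rewrite (lsum_ext _ (fun _ => 0)) by (intros; apply lsum_nil). rewrite lsum_const; ring.
  - rewrite IH, <- lsum_plus. apply lsum_ext; intros; now rewrite lsum_cons.
Qed.

Lemma lsum_mul {A B : Type} (f : A -> R) (g : B -> R) l1 l2 :
  lsum f l1 * lsum g l2 = lsum (fun x => lsum (fun y => f x * g y) l2) l1.
Proof.
  induction l1 as [|x l1 IH]; rewrite ?lsum_nil, ?lsum_cons; [ring|].
  now rewrite <- IH, lsum_scal, Rmult_plus_distr_r.
Qed.

Lemma list_pos_lower_bound {A : Type} (f : A -> R) l : (forall v, In v l -> 0 < f v) ->
  exists m, 0 < m /\ forall v, In v l -> m <= f v.
Proof.
  induction l as [|x l IH]; intros H.
  - exists 1. split; [lra | intros v []].
  - destruct IH as (m & Hm & Hml); [intros; apply H; now right|].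
    exists (Rmin m (f x)). split; [apply Rmin_glb_lt; auto; apply H; now left|].
    intros v [<-|Hv]; [apply Rmin_r|]. eapply Rle_trans; [apply Rmin_l | auto].
Qed.

Lemma dist2_norm (z w : pt) : dist2 z w = norm (minus z w).
Proof.
  unfold dist2.
  change (norm (minus z w)) with (sqrt (Rabs (fst z - fst w) ^ 2 + Rabs (snd z - snd w) ^ 2)).
  now rewrite !pow2_abs.
Qed.

Lemma dist2_sym z w : dist2 z w = dist2 w z.
Proof. now rewrite !dist2_norm, <- norm_opp, opp_minus. Qed.

Lemma dist2_triangle z w u : dist2 z u <= dist2 z w + dist2 w u.
Proof. rewrite !dist2_norm, (minus_trans w). apply (norm_triangle (minus z w) (minus w u)). Qed.

Lemma dist2_sqr z w : dist2 z w ^ 2 = (fst z - fst w) ^ 2 + (snd z - snd w) ^ 2.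
Proof. apply pow2_sqrt. generalize (pow2_ge_0 (fst z - fst w)) (pow2_ge_0 (snd z - snd w)); lra. Qed.

Lemma abs_coords_le_dist2 z w :
  Rabs (fst z - fst w) <= dist2 z w /\ Rabs (snd z - snd w) <= dist2 z w.
Proof.
  destruct (sqrt_plus_sqr (fst z - fst w) (snd z - snd w)) as [H _].
  generalize (Rmax_l (Rabs (fst z - fst w)) (Rabs (snd z - snd w)))
             (Rmax_r (Rabs (fst z - fst w)) (Rabs (snd z - snd w))).
  unfold dist2; lra.
Qed.

Lemma dist2_le_box z w d :
  Rabs (fst z - fst w) <= d -> Rabs (snd z - snd w) <= d -> dist2 z w <= 2 * d.
Proof.
  intros Hx Hy.
  destruct (sqrt_plus_sqr (fst z - fst w) (snd z - snd w)) as [_ H].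
  assert (Hm : Rmax (Rabs (fst z - fst w)) (Rabs (snd z - snd w)) <= d) by now apply Rmax_lub.
  assert (H2 : sqrt 2 <= 2).
  { rewrite <- (sqrt_pow2 2) at 2 by lra. apply sqrt_le_1_alt; lra. }
  assert (0 <= Rmax (Rabs (fst z - fst w)) (Rabs (snd z - snd w))).
  { apply (Rle_trans _ _ _ (Rabs_pos (fst z - fst w))), Rmax_l. }
  unfold dist2. generalize (Rlt_sqrt2_0); nra.
Qed.

Definition modulus (z : pt) : R := dist2 z (0, 0).

Lemma modulus_sqrt z : modulus z = sqrt (fst z ^ 2 + snd z ^ 2).
Proof. unfold modulus, dist2; cbn [fst snd]; now rewrite !Rminus_0_r. Qed.

Lemma abs_coords_le_modulus z : Rabs (fst z) <= modulus z /\ Rabs (snd z) <= modulus z.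
Proof. generalize (abs_coords_le_dist2 z (0, 0)); simpl; now rewrite !Rminus_0_r. Qed.

Lemma sqrt_scale_sqr k x y : 0 <= k -> sqrt ((k * x) ^ 2 + (k * y) ^ 2) = k * sqrt (x ^ 2 + y ^ 2).
Proof.
  intro Hk. replace ((k * x) ^ 2 + (k * y) ^ 2) with (k ^ 2 * (x ^ 2 + y ^ 2)) by ring.
  rewrite sqrt_mult_alt by (apply pow2_ge_0). now rewrite sqrt_pow2.
Qed.

(* The point of the segment [0, c] at distance t from c (or 0 if t >= |c|). *)
Lemma exists_point_toward_origin (c : pt) t : 0 <= t ->
  exists p, dist2 p c <= t /\ modulus p <= Rmax 0 (modulus c - t).
Proof.
  intros Ht. destruct (Rle_lt_dec (modulus c) t) as [Hc|Hc].
  - exists (0, 0). rewrite dist2_sym. split; [exact Hc|].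
    rewrite modulus_sqrt; cbn [fst snd].
    replace (0 ^ 2 + 0 ^ 2) with 0 by ring. rewrite sqrt_0. apply Rmax_l.
  - set (m := modulus c) in *. set (l := (m - t) / m).
    assert (Hl : 0 <= l) by (apply Rdiv_le_0_compat; lra).
    assert (Hl' : 1 - l = t / m) by (unfold l; field; lra).
    exists (l * fst c, l * snd c). split; [apply Req_le | apply Rmax_Rle; right; apply Req_le].
    + unfold dist2; cbn [fst snd].
      replace (l * fst c - fst c) with ((1 - l) * - fst c) by ring.
      replace (l * snd c - snd c) with ((1 - l) * - snd c) by ring.
      rewrite sqrt_scale_sqr by (rewrite Hl'; apply Rdiv_le_0_compat; lra).
      rewrite <- !Rsqr_pow2, <- !Rsqr_neg, !Rsqr_pow2, <- modulus_sqrt, Hl'.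
      fold m; field; lra.
    + rewrite modulus_sqrt; cbn [fst snd].
      rewrite sqrt_scale_sqr, <- modulus_sqrt by exact Hl. unfold l; fold m; field; lra.
Qed.

Definition square (rho : R) (z : pt) : Prop := Rabs (fst z) <= rho /\ Rabs (snd z) <= rho.

Lemma square_compact rho : compact2 (square rho).
Proof.
  intros I U Hopen Hcover.
  destruct (Rlt_le_dec rho 0) as [Hneg|Hpos].
  { exists nil. intros z [Hz _]. generalize (Rabs_pos (fst z)); lra. }
  destruct (Hcover (0, 0)) as [i0 _].
  { unfold square; simpl; rewrite Rabs_R0; lra. }
  set (pt_of := fun t : Tn 2 R => (fst t, fst (snd t)) : pt).
  assert (Hlebesgue : forall t : Tn 2 R, exists p : I * posreal,
    square rho (pt_of t) -> forall w, dist2 w (pt_of t) < 2 * snd p -> U (fst p) w).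
  { intro t. destruct (classic (square rho (pt_of t))) as [Ht|Ht].
    - destruct (Hcover _ Ht) as [i Hi]. destruct (Hopen i _ Hi) as [eps [He Hball]].
      exists (i, mkposreal (eps / 2) ltac:(lra)); simpl.
      intros _ w Hw. apply Hball. rewrite dist2_sym. lra.
    - exists (i0, mkposreal 1 Rlt_0_1). tauto. }
  destruct (choice _ Hlebesgue) as [sel Hsel].
  apply NNPP. intro Hnone.
  apply (compactness_list 2 (-rho, (-rho, tt)) (rho, (rho, tt)) (fun t => snd (sel t))).
  intros [l Hl]. apply Hnone.
  exists (map (fun t => fst (sel t)) l). intros z [Hx Hy].
  apply Rabs_le_between in Hx, Hy.
  destruct (Hl (fst z, (snd z, tt))) as ([t1 [t2 []]] & Htl & Htb & Hclose); [simpl; tauto|].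
  exists (fst (sel (t1, (t2, tt)))). split; [now apply in_map_iff; eexists; split; eauto|].
  apply Hsel.
  - simpl in Htb. split; apply Rabs_le_between; simpl; tauto.
  - simpl in Hclose. destruct Hclose as (H1 & H2 & _).
    assert (Hd := dist2_le_box z (pt_of (t1, (t2, tt)))
                   (Rmax (Rabs (fst z - t1)) (Rabs (snd z - t2))) (Rmax_l _ _) (Rmax_r _ _)).
    assert (Rmax (Rabs (fst z - t1)) (Rabs (snd z - t2)) < snd (sel (t1, (t2, tt)))).
    { now apply Rmax_lub_lt. }
    lra.
Qed.

Section Chains.
Context {V : Type} (rel : V -> V -> Prop).

Fixpoint chain (x : V) (l : list V) (y : V) : Prop :=
  match l with nil => x = y | z :: l' => rel x z /\ chain z l' y end.

Lemma chain_suffix p : forall z l x s y, chain z l y -> z :: l = p ++ x :: s -> chain x s y.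
Proof.
  induction p as [|w p IH]; intros z l x s y Hc E; simpl in E; injection E as <- E.
  - now subst.
  - destruct p as [|u p]; simpl in E; subst l; destruct Hc as [_ Hc]; [exact Hc|].
    now apply (IH u (p ++ x :: s)).
Qed.

Lemma chain_shorten l : forall x y, chain x l y ->
  exists l', chain x l' y /\ NoDup (x :: l') /\ incl (x :: l') (x :: l).
Proof.
  induction l as [|z l IH]; intros x y Hc.
  - exists nil. split; [exact Hc|]. split; [repeat constructor; simpl; tauto | apply incl_refl].
  - destruct Hc as [Hxz Hc]. destruct (IH z y Hc) as (l1 & Hc1 & Hnd1 & Hinc1).
    destruct (classic (In x (z :: l1))) as [Hin|Hnin].
    + destruct (in_split x (z :: l1) Hin) as (p & s & E).
      exists s. split; [exact (chain_suffix p z l1 x s y Hc1 E)|].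
      rewrite E in Hnd1. split; [exact (NoDup_app_remove_l _ _ Hnd1)|].
      intros w [<-|Hw]; [now left|]. right. apply Hinc1. rewrite E.
      apply in_or_app. now right; right.
    + exists (z :: l1). split; [now split|]. split; [now constructor|].
      intros w [<-|Hw]; [now left|]. right. now apply Hinc1.
Qed.

Lemma path_chain (f : nat -> V) :
  (forall n, rel (f n) (f (S n))) -> forall m, chain (f 0%nat) (map f (seq 1 m)) (f m).
Proof.
  intros Hf.
  enough (H : forall m k, chain (f k) (map f (seq (S k) m)) (f (k + m)%nat))
    by (intros m; exact (H m 0%nat)).
  induction m as [|m IH]; intros k; simpl.
  - now rewrite Nat.add_0_r.
  - split; [apply Hf|]. replace (k + S m)%nat with (S k + m)%nat by lia. apply IH.
Qed.

End Chains.

Section IntervalChains.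
Context {V : Type} (a b : V -> R) (a_le_b : forall v, a v <= b v).

(* An upper bound for the length of the intersection of [a v, b v] with [al, be]. *)
Definition clipped_length (al be : R) (v : V) : R :=
  indicator (al <= b v /\ a v <= be) * Rmin (b v - a v) (be - al).

Lemma clipped_length_nonneg al be v : al <= be -> 0 <= clipped_length al be v.
Proof.
  intros H. apply Rmult_le_pos; [apply indicator_bounds|].
  apply Rmin_glb; generalize (a_le_b v); lra.
Qed.

Lemma clipped_length_antimono al al' be v :
  al <= al' <= be -> clipped_length al' be v <= clipped_length al be v.
Proof.
  intros H. unfold clipped_length.
  destruct (classic (al' <= b v /\ a v <= be)) as [h|h].
  - rewrite !indicator_T by lra. generalize (a_le_b v).
    unfold Rmin; destruct Rle_dec; destruct Rle_dec; lra.
  - rewrite (indicator_F _ h), Rmult_0_l. apply (clipped_length_nonneg al be v); lra.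
Qed.

Lemma chain_covers_interval be l : forall x y,
  chain (fun u v => a v <= b u) x l y ->
  forall al, al <= be -> a x <= al -> be <= b y ->
  be - al <= lsum (clipped_length al be) (x :: l).
Proof.
  induction l as [|z l IH]; intros x y Hc al H1 H2 H3; rewrite lsum_cons.
  - simpl in Hc; subst y. rewrite lsum_nil. unfold clipped_length. rewrite indicator_T by lra.
    generalize (a_le_b x). unfold Rmin; destruct Rle_dec; lra.
  - destruct Hc as [Hz Hc].
    assert (Htail : 0 <= lsum (clipped_length al be) (z :: l)).
    { apply lsum_nonneg; intros; now apply clipped_length_nonneg. }
    destruct (Rle_lt_dec be (b x)) as [h|h]; [|destruct (Rle_lt_dec al (b x)) as [h2|h2]].
    + assert (clipped_length al be x = be - al); [|lra].
      unfold clipped_length. rewrite indicator_T by lra.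
      generalize (a_le_b x). unfold Rmin; destruct Rle_dec; lra.
    + assert (b x - al <= clipped_length al be x).
      { unfold clipped_length. rewrite indicator_T by lra.
        generalize (a_le_b x). unfold Rmin; destruct Rle_dec; lra. }
      assert (be - b x <= lsum (clipped_length (b x) be) (z :: l)) by (apply (IH z y Hc); lra).
      assert (lsum (clipped_length (b x) be) (z :: l) <= lsum (clipped_length al be) (z :: l)).
      { apply lsum_le; intros; apply clipped_length_antimono; lra. }
      lra.
    + assert (be - al <= lsum (clipped_length al be) (z :: l)) by (apply (IH z y Hc); lra).
      assert (0 <= clipped_length al be x) by (apply clipped_length_nonneg; lra). lra.
Qed.

End IntervalChains.

Lemma grid_count_lower x y a h K : 0 < h ->
  Rmin y (a + INR K * h) - Rmax x a - h <=
  h * lsum (fun n => indicator (x <= a + INR n * h <= y)) (seq 0 K).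
Proof.
  intros Hh. induction K as [|K IH].
  - simpl. unfold Rmin, Rmax. destruct Rle_dec; destruct Rle_dec; lra.
  - rewrite seq_S, lsum_app, lsum_cons, lsum_nil, S_INR. simpl Nat.add.
    set (p := a + INR K * h) in *.
    replace (a + (INR K + 1) * h) with (p + h) by (unfold p; ring).
    assert (Hs : 0 <= lsum (fun n => indicator (x <= a + INR n * h <= y)) (seq 0 K)).
    { apply lsum_nonneg; intros; apply indicator_bounds. }
    destruct (classic (x <= p <= y)) as [Hp|Hp].
    + rewrite indicator_T by exact Hp. revert IH.
      unfold Rmin, Rmax; destruct Rle_dec; destruct Rle_dec; destruct Rle_dec; lra.
    + rewrite indicator_F by exact Hp. revert IH.
      unfold Rmin, Rmax; destruct Rle_dec; destruct Rle_dec; destruct Rle_dec; nra.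
Qed.

Section Shells.
Context {V : Type} (a b : V -> R) (a_le_b : forall v, a v <= b v).

Definition in_shell (q : R) (v : V) : Prop := q <= b v /\ a v <= 2 * q.

(* The radial length of v inside the annulus [q, 2 q], normalised by its width 2 q. *)
Definition shell_metric (q : R) (v : V) : R := clipped_length a b q (2 * q) v / (2 * q).

Lemma shell_metric_nonneg q v : 0 < q -> 0 <= shell_metric q v.
Proof. intros Hq. apply Rdiv_le_0_compat; [apply clipped_length_nonneg|]; auto; lra. Qed.

Lemma shell_metric_eq q v :
  shell_metric q v = indicator (in_shell q v) * Rmin (b v - a v) q / (2 * q).
Proof. unfold shell_metric, clipped_length. now replace (2 * q - q) with q by ring. Qed.

Lemma shell_metric_outside q v : ~ in_shell q v -> shell_metric q v = 0.
Proof. intros H. rewrite shell_metric_eq, indicator_F by exact H. unfold Rdiv; ring. Qed.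

Lemma chain_crosses_shell q l x y : 0 < q ->
  chain (fun u v => a v <= b u) x l y -> a x <= q -> 2 * q <= b y ->
  1 / 2 <= lsum (shell_metric q) (x :: l).
Proof.
  intros Hq Hc Hx Hy.
  assert (Hcov := chain_covers_interval a b a_le_b (2 * q) l x y Hc q ltac:(lra) Hx Hy).
  rewrite (lsum_ext _ (fun v => / (2 * q) * clipped_length a b q (2 * q) v))
    by (intros; unfold shell_metric, Rdiv; ring).
  rewrite lsum_scal.
  apply Rmult_le_reg_l with (2 * q); [lra|].
  rewrite <- Rmult_assoc, Rinv_r, Rmult_1_l by lra. lra.
Qed.

End Shells.

Lemma in_disk_sqr D z : 0 < dradius D -> in_disk D z -> dist2 z (dcenter D) ^ 2 <= dradius D ^ 2.
Proof. intros Hr Hz. apply pow_incr. split; [apply sqrt_pos | exact Hz]. Qed.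

(* A non-obtuse dihedral angle makes the radii at a common boundary point z
   form a non-acute angle, whence Pythagoras. *)
Lemma dihedral_centers_apart D1 D2 th :
  0 < dradius D1 -> 0 < dradius D2 -> th <= PI / 2 -> dihedral_angle D1 D2 th ->
  dradius D1 ^ 2 + dradius D2 ^ 2 <= dist2 (dcenter D1) (dcenter D2) ^ 2.
Proof.
  intros Hr1 Hr2 Hth [[Hth0 _] (z & Hz1 & Hz2 & Hcos)].
  assert (Hdot : 0 <= dot (cw_tangent D1 z) (ccw_tangent D2 z)).
  { rewrite <- Hcos. apply cos_ge_0; lra. }
  unfold on_circle in Hz1, Hz2. rewrite <- Hz1, <- Hz2, !dist2_sqr.
  unfold dot, cw_tangent, ccw_tangent in Hdot; cbn [fst snd] in Hdot.
  set (x1 := fst z - fst (dcenter D1)) in *. set (y1 := snd z - snd (dcenter D1)) in *.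
  set (x2 := fst z - fst (dcenter D2)) in *. set (y2 := snd z - snd (dcenter D2)) in *.
  set (r1 := dradius D1) in *. set (r2 := dradius D2) in *.
  assert (Hobtuse : x1 * x2 + y1 * y2 <= 0).
  { replace (y1 / r1 * (- y2 / r2) + - x1 / r1 * (x2 / r2))
      with (- (x1 * x2 + y1 * y2) / (r1 * r2)) in Hdot by (field; lra).
    assert (Hr : 0 < r1 * r2) by nra.
    assert (H := Rmult_le_pos _ _ Hdot (Rlt_le _ _ Hr)).
    replace (- (x1 * x2 + y1 * y2) / (r1 * r2) * (r1 * r2)) with (- (x1 * x2 + y1 * y2)) in H
      by (field; lra).
    lra. }
  replace (fst (dcenter D1) - fst (dcenter D2)) with (x2 - x1) by (unfold x1, x2; ring).
  replace (snd (dcenter D1) - snd (dcenter D2)) with (y2 - y1) by (unfold y1, y2; ring).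
  nra.
Qed.

Definition quadrant (z : pt) : nat :=
  if excluded_middle_informative (fst z = 0 /\ snd z = 0) then 0
  else if excluded_middle_informative (0 < fst z /\ 0 <= snd z) then 1
  else if excluded_middle_informative (fst z <= 0 /\ 0 < snd z) then 2
  else if excluded_middle_informative (fst z < 0 /\ snd z <= 0) then 3
  else 4.

Lemma quadrant_lt_5 z : (quadrant z < 5)%nat.
Proof. unfold quadrant; repeat destruct excluded_middle_informative; lia. Qed.

Lemma same_quadrant_acute z w : quadrant z = quadrant w -> z <> w -> 0 < dot z w.
Proof.
  destruct z as [x1 y1], w as [x2 y2]. unfold quadrant, dot; cbn [fst snd]. intros E Hne.
  repeat destruct excluded_middle_informative; try discriminate E; try nra.
  exfalso; apply Hne; f_equal; lra.
Qed.

Section SeparatedDisks.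
Context {V : Type} (P : V -> disk).
Hypothesis radius_pos : forall v, 0 < dradius (P v).
Hypothesis centers_apart : forall u v, u <> v -> disks_meet (P u) (P v) ->
  dradius (P u) ^ 2 + dradius (P v) ^ 2 <= dist2 (dcenter (P u)) (dcenter (P v)) ^ 2.

Definition center_offset (p : pt) (v : V) : pt :=
  (fst (dcenter (P v)) - fst p, snd (dcenter (P v)) - snd p).

Lemma quadrant_offset_inj p u v : in_disk (P u) p -> in_disk (P v) p ->
  quadrant (center_offset p u) = quadrant (center_offset p v) -> u = v.
Proof.
  intros Hu Hv E. apply NNPP; intro Huv.
  assert (Hsep := centers_apart u v Huv (ex_intro _ p (conj Hu Hv))).
  apply in_disk_sqr in Hu, Hv; auto.
  rewrite dist2_sqr in Hsep, Hu, Hv.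
  assert (Hpos := pow_lt _ 2 (radius_pos u)).
  assert (Hacute := same_quadrant_acute _ _ E).
  unfold dot, center_offset in Hacute; cbn [fst snd] in Hacute.
  assert (Hne : center_offset p u <> center_offset p v).
  { intros Heq. injection Heq as Ex Ey.
    replace (fst (dcenter (P u))) with (fst (dcenter (P v))) in Hsep by lra.
    replace (snd (dcenter (P u))) with (snd (dcenter (P v))) in Hsep by lra.
    generalize (pow2_ge_0 (dradius (P v))); nra. }
  specialize (Hacute Hne). nra.
Qed.

Lemma multiplicity_le_5 p l : NoDup l -> lsum (fun v => indicator (in_disk (P v) p)) l <= 5.
Proof.
  intros Hnd. rewrite lsum_indicator.
  set (l' := filter _ l).
  assert (Hl' : forall v, In v l' -> in_disk (P v) p).
  { intros v Hv. apply filter_In in Hv as [_ Hv].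
    destruct excluded_middle_informative; [assumption | discriminate]. }
  assert (Hinj : NoDup (map (fun v => quadrant (center_offset p v)) l')).
  { apply NoDup_map_NoDup_ForallPairs; [|now apply NoDup_filter].
    intros u v Hu Hv. apply quadrant_offset_inj; auto. }
  assert (Hincl : incl (map (fun v => quadrant (center_offset p v)) l') (seq 0 5)).
  { intros k Hk. apply in_map_iff in Hk as (v & <- & _). apply in_seq.
    generalize (quadrant_lt_5 (center_offset p v)); lia. }
  assert (Hlen := NoDup_incl_length Hinj Hincl).
  rewrite length_map, length_seq in Hlen. apply le_INR in Hlen. simpl in Hlen. lra.
Qed.

Definition inner_extent (v : V) : R := modulus (dcenter (P v)) - dradius (P v).
Definition outer_extent (v : V) : R := modulus (dcenter (P v)) + dradius (P v).

Lemma inner_le_outer_extent v : inner_extent v <= outer_extent v.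
Proof. unfold inner_extent, outer_extent. generalize (radius_pos v); lra. Qed.

Lemma disks_meet_extent u v : disks_meet (P u) (P v) -> inner_extent v <= outer_extent u.
Proof.
  intros (z & Hu & Hv). unfold in_disk in Hu, Hv. unfold inner_extent, outer_extent, modulus.
  generalize (dist2_triangle (dcenter (P v)) z (0, 0)) (dist2_triangle z (dcenter (P u)) (0, 0)).
  rewrite (dist2_sym (dcenter (P v)) z). lra.
Qed.

Definition inner_radius (q : R) (v : V) : R := Rmin (dradius (P v)) (q / 2).

Lemma inner_radius_pos q v : 0 < q -> 0 < inner_radius q v.
Proof. intros Hq. apply Rmin_glb_lt; [apply radius_pos | lra]. Qed.

Lemma shell_metric_disk q v : 0 < q ->
  shell_metric inner_extent outer_extent q v =
  indicator (in_shell inner_extent outer_extent q v) * inner_radius q v / q.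
Proof.
  intros Hq. rewrite shell_metric_eq. unfold inner_radius, inner_extent, outer_extent.
  replace (Rmin _ q) with (2 * Rmin (dradius (P v)) (q / 2))
    by (unfold Rmin; destruct Rle_dec; destruct Rle_dec; lra).
  field; lra.
Qed.

Lemma shell_square_in_disk q v : 0 < q -> in_shell inner_extent outer_extent q v ->
  exists c, Rabs (fst c) <= 2 * q + inner_radius q v /\
            Rabs (snd c) <= 2 * q + inner_radius q v /\
    forall p, Rabs (fst p - fst c) <= inner_radius q v / 2 ->
              Rabs (snd p - snd c) <= inner_radius q v / 2 -> in_disk (P v) p.
Proof.
  intros Hq [_ Hin]. set (s := inner_radius q v).
  assert (Hs : 0 < s <= dradius (P v)) by (split; [apply inner_radius_pos | apply Rmin_l]; auto).
  destruct (exists_point_toward_origin (dcenter (P v)) (dradius (P v) - s)) as (c & Hc & Hmod);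
    [lra|].
  assert (Hmod' : modulus c <= 2 * q + s).
  { eapply Rle_trans; [exact Hmod|]. apply Rmax_lub; unfold inner_extent in Hin; lra. }
  destruct (abs_coords_le_modulus c) as [Hx Hy].
  exists c. split; [lra|]. split; [lra|].
  intros p Hpx Hpy. unfold in_disk.
  generalize (dist2_le_box p c (s / 2) Hpx Hpy) (dist2_triangle p c (dcenter (P v))). lra.
Qed.

Section Grid.
Variables (L h : R) (K : nat).

Definition grid_point (n k : nat) : pt := (- L + INR n * h, - L + INR k * h).

Definition grid_hits (v : V) : R :=
  lsum (fun n => lsum (fun k => indicator (in_disk (P v) (grid_point n k))) (seq 0 K)) (seq 0 K).

Lemma grid_hits_sum_le l : NoDup l -> lsum grid_hits l <= 5 * INR K ^ 2.
Proof.
  intros Hnd. unfold grid_hits. rewrite lsum_comm.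
  replace (5 * INR K ^ 2) with (lsum (fun _ => INR K * 5) (seq 0 K))
    by (rewrite lsum_const, length_seq; ring).
  apply lsum_le; intros n _. rewrite lsum_comm.
  apply Rle_trans with (lsum (fun _ => 5) (seq 0 K)).
  - apply lsum_le; intros k _. now apply multiplicity_le_5.
  - rewrite lsum_const, length_seq; lra.
Qed.

Lemma grid_hits_square v c s : 0 < h -> 2 * h <= s ->
  - L <= fst c - s / 2 -> fst c + s / 2 <= - L + INR K * h ->
  - L <= snd c - s / 2 -> snd c + s / 2 <= - L + INR K * h ->
  (forall p, Rabs (fst p - fst c) <= s / 2 -> Rabs (snd p - snd c) <= s / 2 -> in_disk (P v) p) ->
  s ^ 2 <= 4 * h ^ 2 * grid_hits v.
Proof.
  intros Hh Hs Hx1 Hx2 Hy1 Hy2 Hsq.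
  set (count := fun x => lsum (fun n => indicator (x - s / 2 <= - L + INR n * h <= x + s / 2))
                              (seq 0 K)).
  assert (Hcount : forall x, - L <= x - s / 2 -> x + s / 2 <= - L + INR K * h ->
                             s / 2 <= h * count x).
  { intros x H1 H2. assert (H := grid_count_lower (x - s / 2) (x + s / 2) (- L) h K Hh).
    rewrite Rmin_left, Rmax_left in H by lra. unfold count. lra. }
  assert (Hprod : count (fst c) * count (snd c) <= grid_hits v).
  { unfold count, grid_hits. rewrite lsum_mul.
    apply lsum_le; intros n _. apply lsum_le; intros k _.
    apply indicator_mul_le. intros Hn Hk. apply Hsq; apply Rabs_le_between'; simpl; lra. }
  generalize (Hcount _ Hx1 Hx2) (Hcount _ Hy1 Hy2). nra.
Qed.

End Grid.

Lemma shell_metric_sqr_le_grid q h K v : 0 < q -> 0 < h ->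
  2 * h <= inner_radius q v -> 6 * q <= INR K * h ->
  shell_metric inner_extent outer_extent q v ^ 2 <= 4 * h ^ 2 / q ^ 2 * grid_hits (3 * q) h K v.
Proof.
  intros Hq Hh Hhs HK. rewrite shell_metric_disk by exact Hq.
  assert (Hgrid : 0 <= grid_hits (3 * q) h K v).
  { apply lsum_nonneg; intros; apply lsum_nonneg; intros; apply indicator_bounds. }
  destruct (classic (in_shell inner_extent outer_extent q v)) as [Hin|Hout].
  - rewrite indicator_T by exact Hin.
    destruct (shell_square_in_disk q v Hq Hin) as (c & Hcx & Hcy & Hsq).
    assert (Hs : inner_radius q v <= q / 2) by apply Rmin_r.
    apply Rabs_le_between in Hcx, Hcy.
    assert (H := grid_hits_square (3 * q) h K v c (inner_radius q v) Hh Hhs).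
    replace ((1 * inner_radius q v / q) ^ 2) with (inner_radius q v ^ 2 / q ^ 2) by (field; lra).
    replace (4 * h ^ 2 / q ^ 2 * grid_hits (3 * q) h K v)
      with (4 * h ^ 2 * grid_hits (3 * q) h K v / q ^ 2) by (field; lra).
    apply Rmult_le_compat_r; [|apply H; auto; lra].
    apply Rlt_le, Rinv_0_lt_compat, pow_lt; lra.
  - rewrite indicator_F by exact Hout.
    replace ((0 * inner_radius q v / q) ^ 2) with 0 by (field; lra).
    apply Rmult_le_pos; [|exact Hgrid]. apply Rdiv_le_0_compat; [nra | apply pow_lt; lra].
Qed.

Lemma shell_metric_area_le q l : 0 < q -> NoDup l ->
  lsum (fun v => shell_metric inner_extent outer_extent q v ^ 2) l <= 980.
Proof.
  intros Hq Hnd.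
  (* A spacing h = 6 q / M below q and below half of every inner radius in l. *)
  destruct (list_pos_lower_bound (fun v => inner_radius q v / 2) l) as (m0 & Hm0 & Hml).
  { intros v _. generalize (inner_radius_pos q v Hq); lra. }
  assert (Hm : 0 < Rmin m0 q) by (apply Rmin_glb_lt; lra).
  destruct (INR_archimed (Rmin m0 q) (6 * q)) as [M HM]; [lra|].
  assert (HM0 : 0 < INR M) by nra.
  set (h := 6 * q / INR M).
  assert (Hh : 0 < h) by (apply Rdiv_lt_0_compat; lra).
  assert (Hhm : h <= Rmin m0 q).
  { unfold h. apply Rmult_le_reg_r with (INR M); [lra|]. field_simplify; lra. }
  assert (HKh : INR (S M) * h = 6 * q + h) by (rewrite S_INR; unfold h; field; lra).
  assert (Hhs : forall v, In v l -> 2 * h <= inner_radius q v).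
  { intros v Hv. generalize (Hml v Hv) (Rmin_l m0 q). lra. }
  eapply Rle_trans.
  { apply lsum_le. intros v Hv.
    apply (shell_metric_sqr_le_grid q h (S M) v Hq Hh (Hhs v Hv)); lra. }
  rewrite lsum_scal.
  apply Rle_trans with (4 * h ^ 2 / q ^ 2 * (5 * INR (S M) ^ 2)).
  - apply Rmult_le_compat_l; [apply Rdiv_le_0_compat; [nra | apply pow_lt; lra]|].
    now apply grid_hits_sum_le.
  - replace (4 * h ^ 2 / q ^ 2 * (5 * INR (S M) ^ 2)) with (20 * (INR (S M) * h / q) ^ 2)
      by (field; lra).
    rewrite HKh. replace ((6 * q + h) / q) with (6 + h / q) by (field; lra).
    generalize (Rmin_r m0 q); intros.
    assert (0 <= h / q <= 1) by (split; [apply Rdiv_le_0_compat | apply (Rdiv_le_1 h q)]; lra).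
    nra.
Qed.
End SeparatedDisks.

Section Scales.
Context {V : Type} (a b : V -> R) (a_le_b : forall v, a v <= b v).
Variable B : R -> R.
Hypothesis extent_bound : forall rho v, a v <= rho -> b v <= B rho.

(* Chosen so that nothing meeting the annulus [scale n, 2 scale n] reaches scale (n + 1). *)
Fixpoint scale (R0 : R) (n : nat) : R :=
  match n with
  | O => R0
  | S k => Rmax (2 * scale R0 k) (B (2 * scale R0 k)) + 1
  end.

Variable R0 : R.
Hypothesis R0_pos : 0 < R0.

Lemma scale_succ_ge n : 2 * scale R0 n + 1 <= scale R0 (S n).
Proof. simpl. generalize (Rmax_l (2 * scale R0 n) (B (2 * scale R0 n))); lra. Qed.

Lemma scale_ge_R0 n : R0 <= scale R0 n.
Proof. induction n as [|n IH]; [simpl; lra|]. generalize (scale_succ_ge n); lra. Qed.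

Lemma scale_mono i j : (i <= j)%nat -> scale R0 i <= scale R0 j.
Proof.
  induction 1 as [|j _ IH]; [lra|].
  generalize (scale_succ_ge j) (scale_ge_R0 j); lra.
Qed.

Lemma shells_disjoint i j v : (i < j)%nat ->
  in_shell a b (scale R0 i) v -> ~ in_shell a b (scale R0 j) v.
Proof.
  intros Hij [_ Ha] [Hb _].
  generalize (extent_bound _ _ Ha) (scale_mono _ _ Hij).
  simpl; generalize (Rmax_r (2 * scale R0 i) (B (2 * scale R0 i))); lra.
Qed.

Definition averaged_metric (N : nat) (v : V) : R :=
  2 / INR N * lsum (fun i => shell_metric a b (scale R0 i) v) (seq 0 N).

Variable N : nat.
Hypothesis N_pos : (0 < N)%nat.

Lemma averaged_metric_nonneg v : 0 <= averaged_metric N v.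
Proof.
  apply Rmult_le_pos; [apply Rdiv_le_0_compat; [lra | now apply lt_0_INR]|].
  apply lsum_nonneg; intros i _. apply shell_metric_nonneg; auto.
  generalize (scale_ge_R0 i); lra.
Qed.

(* The shells are disjoint, so squaring the average creates no cross terms. *)
Lemma averaged_metric_area C l : NoDup l ->
  (forall q, 0 < q -> lsum (fun v => shell_metric a b q v ^ 2) l <= C) ->
  lsum (fun v => averaged_metric N v ^ 2) l <= 4 * C / INR N.
Proof.
  intros Hnd Harea. assert (HN : 0 < INR N) by now apply lt_0_INR.
  assert (Hdisj : forall v i j, In i (seq 0 N) -> In j (seq 0 N) -> i <> j ->
    shell_metric a b (scale R0 i) v = 0 \/ shell_metric a b (scale R0 j) v = 0).
  { intros v i j _ _ Hij.
    destruct (classic (in_shell a b (scale R0 i) v)) as [Hi|Hi];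
      [right | left; now apply shell_metric_outside].
    apply shell_metric_outside.
    destruct (Nat.lt_gt_cases i j) as [[Hlt|Hlt] _]; [exact Hij | |].
    - exact (shells_disjoint i j v Hlt Hi).
    - intros Hj. exact (shells_disjoint j i v Hlt Hj Hi). }
  assert (Hsqr : forall v, averaged_metric N v ^ 2 =
    4 / INR N ^ 2 * lsum (fun i => shell_metric a b (scale R0 i) v ^ 2) (seq 0 N)).
  { intros v. unfold averaged_metric.
    rewrite <- lsum_sqr_disjoint by (apply seq_NoDup || apply Hdisj). field; lra. }
  rewrite (lsum_ext _ _ l (fun v _ => Hsqr v)), lsum_scal, lsum_comm.
  apply Rle_trans with (4 / INR N ^ 2 * lsum (fun _ => C) (seq 0 N)).
  - apply Rmult_le_compat_l; [apply Rdiv_le_0_compat; [lra | apply pow_lt; lra]|].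
    apply lsum_le; intros i _. apply Harea. generalize (scale_ge_R0 i); lra.
  - rewrite lsum_const, length_seq. right; field; lra.
Qed.

(* A chain starting inside radius R0 and ending beyond 2 scale N crosses all N annuli. *)
Lemma averaged_metric_chain l x y :
  chain (fun u v => a v <= b u) x l y -> b x <= R0 -> 2 * scale R0 N <= b y ->
  1 <= lsum (averaged_metric N) (x :: l).
Proof.
  intros Hc Hx Hy. assert (HN : 0 < INR N) by now apply lt_0_INR.
  unfold averaged_metric. rewrite lsum_scal, lsum_comm.
  assert (Hcross : INR N * (1 / 2) <=
                   lsum (fun i => lsum (fun v => shell_metric a b (scale R0 i) v) (x :: l)) (seq 0 N)).
  { rewrite <- (length_seq N 0) at 1. rewrite <- lsum_const.
    apply lsum_le; intros i Hi. apply in_seq in Hi.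
    apply (chain_crosses_shell a b a_le_b _ _ x y); auto.
    - generalize (scale_ge_R0 i); lra.
    - generalize (a_le_b x) (scale_ge_R0 i); lra.
    - generalize (scale_mono i N ltac:(lia)); lra. }
  apply Rmult_le_reg_l with (INR N); [lra|].
  replace (INR N * (2 / INR N * _)) with
    (2 * lsum (fun i => lsum (fun v => shell_metric a b (scale R0 i) v) (x :: l)) (seq 0 N))
    by (field; lra).
  lra.
Qed.

End Scales.

Section ExtremalLength.
Context {V : Type}.

Lemma vlength_ge_lsum (eta : V -> R) (gam : V -> Prop) l :
  NoDup l -> (forall v, In v l -> gam v) -> Rbar_le (lsum eta l) (vlength eta gam).
Proof.
  intros Hnd Hl. unfold vlength, sum_over.
  destruct (Lub_Rbar_correct (fun s => exists l : list V, NoDup l /\ (forall v, In v l -> gam v) /\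
              s = fold_right (fun v acc => eta v + acc) 0 l)) as [Hub _].
  apply Hub. now exists l.
Qed.

Lemma area_ge_0 (eta : V -> R) : Rbar_le 0 (area eta).
Proof.
  unfold area, sum_over.
  destruct (Lub_Rbar_correct (fun s => exists l : list V, NoDup l /\ (forall v, In v l -> True) /\
              s = fold_right (fun v acc => eta v ^ 2 + acc) 0 l)) as [Hub _].
  apply Hub. exists nil. split; [constructor | split; [tauto | reflexivity]].
Qed.

Lemma area_le (eta : V -> R) C :
  (forall l, NoDup l -> lsum (fun v => eta v ^ 2) l <= C) -> Rbar_le (area eta) C.
Proof.
  intros HC. unfold area, sum_over.
  destruct (Lub_Rbar_correct (fun s => exists l : list V, NoDup l /\ (forall v, In v l -> True) /\
              s = fold_right (fun v acc => eta v ^ 2 + acc) 0 l)) as [_ Hlub].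
  apply Hlub. intros s (l & Hnd & _ & ->). now apply HC.
Qed.

Lemma MOD_eq_0 (Gam : (V -> Prop) -> Prop) :
  (forall eps, 0 < eps -> exists eta, admissible Gam eta /\ Rbar_le (area eta) eps) ->
  MOD Gam = Finite 0.
Proof.
  intros Hsmall. unfold MOD.
  set (E := fun A => exists eta, admissible Gam eta /\ area eta = Finite A).
  destruct (Glb_Rbar_correct E) as [Hlb Hglb].
  assert (Hlow : Rbar_le 0 (Glb_Rbar E)).
  { apply Hglb. intros A (eta & _ & HA). rewrite <- HA. apply area_ge_0. }
  assert (Hup : forall eps, 0 < eps -> Rbar_le (Glb_Rbar E) eps).
  { intros eps Heps. destruct (Hsmall eps Heps) as (eta & Hadm & Harea).
    generalize (area_ge_0 eta). destruct (area eta) as [A| |] eqn:HA; simpl in *; try tauto.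
    intros _. apply Rbar_le_trans with A; [apply Hlb; now exists eta | exact Harea]. }
  destruct (Glb_Rbar E) as [g| |]; simpl in Hlow; try tauto.
  - f_equal. apply Rle_antisym; [|exact Hlow].
    apply Rnot_lt_le; intros Hg. specialize (Hup (g / 2) ltac:(lra)). simpl in Hup. lra.
  - now specialize (Hup 1 Rlt_0_1).
Qed.

Lemma VEL_p_infty_of_MOD_0 (Gam : (V -> Prop) -> Prop) : MOD Gam = Finite 0 -> VEL Gam = p_infty.
Proof.
  intros HMOD. unfold VEL. rewrite HMOD.
  destruct excluded_middle_informative; [|reflexivity].
  now destruct Req_dec_T.
Qed.

End ExtremalLength.

Lemma finite_set_upper_bound {V : Type} (f : V -> R) (S : V -> Prop) :
  finite_set S -> exists M, forall v, S v -> f v <= M.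
Proof.
  intros [l Hl].
  enough (exists M, forall v, In v l -> f v <= M) as [M HM] by (exists M; auto).
  clear Hl. induction l as [|x l [M HM]]; [exists 0; intros _ []|].
  exists (Rmax (f x) M).
  intros v [<-|Hv]; [apply Rmax_l | eapply Rle_trans; [apply HM, Hv | apply Rmax_r]].
Qed.

Section RealizedPattern.
Context {V : Type} (adj : V -> V -> Prop) (Th : V -> V -> R) (P : V -> disk).
Hypothesis adj_irrefl : forall v, ~ adj v v.
Hypothesis angle_le_right : forall u v, adj u v -> 0 <= Th u v <= PI / 2.
Hypothesis radius_pos : forall v, 0 < dradius (P v).
Hypothesis P_realizes : realizes adj Th P.
Hypothesis P_locally_finite : locally_finite P.

Lemma realized_centers_apart u v : u <> v -> disks_meet (P u) (P v) ->
  dradius (P u) ^ 2 + dradius (P v) ^ 2 <= dist2 (dcenter (P u)) (dcenter (P v)) ^ 2.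
Proof.
  intros Huv Hmeet. destruct P_realizes as (_ & Hcontact & Hangle).
  assert (Hadj : adjt adj Th u v) by now apply Hcontact.
  apply (dihedral_centers_apart _ _ (Tht adj Th u v)); auto.
  unfold Tht. destruct excluded_middle_informative as [Hedge|_].
  - now apply angle_le_right.
  - generalize PI_RGT_0; lra.
Qed.

Lemma adjacent_extents_overlap u v : adj u v -> inner_extent P v <= outer_extent P u.
Proof.
  intros Huv. apply disks_meet_extent. destruct P_realizes as (_ & Hcontact & _).
  apply Hcontact; [intros <-; exact (adj_irrefl u Huv) | now left].
Qed.

Lemma inner_extent_below_finite rho : finite_set (fun v => inner_extent P v <= rho).
Proof.
  destruct (P_locally_finite (square (Rmax rho 0)) (square_compact _)) as [l Hl].
  exists l. intros v Hv. apply Hl.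
  destruct (exists_point_toward_origin (dcenter (P v)) (dradius (P v))) as (p & Hp & Hmod).
  { generalize (radius_pos v); lra. }
  exists p. split; [|exact Hp].
  assert (modulus p <= Rmax rho 0).
  { eapply Rle_trans; [exact Hmod|]. apply Rmax_lub; [apply Rmax_r|].
    apply Rle_trans with rho; [exact Hv | apply Rmax_l]. }
  destruct (abs_coords_le_modulus p). split; lra.
Qed.

Lemma outer_extent_bound :
  exists B : R -> R, forall rho v, inner_extent P v <= rho -> outer_extent P v <= B rho.
Proof.
  apply (choice (fun rho M => forall v, inner_extent P v <= rho -> outer_extent P v <= M)).
  intros rho. apply finite_set_upper_bound, inner_extent_below_finite.
Qed.

Lemma averaged_metric_admissible B R0 N (V0 : V -> Prop) :
  (forall rho v, inner_extent P v <= rho -> outer_extent P v <= B rho) ->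
  0 < R0 -> (forall v, V0 v -> outer_extent P v <= R0) -> (0 < N)%nat ->
  admissible (paths_to_infinity adj V0)
             (averaged_metric (inner_extent P) (outer_extent P) B R0 N).
Proof.
  intros HB HR0 HV0 HN. pose proof (inner_le_outer_extent P radius_pos) as Hab. split.
  { intros v. now apply averaged_metric_nonneg. }
  intros gam (f & Hf0 & Hfadj & Hinf & Hgam).
  set (rho := 2 * scale B R0 N).
  assert (Hfar : exists m, rho < inner_extent P (f m)).
  { apply NNPP; intros Hnone. apply Hinf.
    destruct (inner_extent_below_finite rho) as [l Hl].
    exists l. intros v [n <-]. apply Hl. apply Rnot_lt_le. intros Hn. apply Hnone. now exists n. }
  destruct Hfar as [m Hm].
  assert (Hc := path_chain (fun u v => inner_extent P v <= outer_extent P u) f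
                  (fun n => adjacent_extents_overlap _ _ (Hfadj n)) m).
  destruct (chain_shorten _ _ _ _ Hc) as (l & Hcl & Hnd & Hincl).
  apply Rbar_le_trans with (lsum (averaged_metric (inner_extent P) (outer_extent P) B R0 N)
                                 (f 0%nat :: l)).
  - simpl. apply (averaged_metric_chain _ _ Hab B R0 HR0 N HN l _ (f m) Hcl).
    + now apply HV0.
    + generalize (Hab (f m)). unfold rho in Hm. lra.
  - apply vlength_ge_lsum; [exact Hnd|]. intros v Hv. apply Hgam.
    destruct (Hincl v Hv) as [<-|Hv']; [now exists 0%nat|].
    apply in_map_iff in Hv' as (k & <- & _). now exists k.
Qed.

Lemma averaged_metric_area_le B R0 N :
  (forall rho v, inner_extent P v <= rho -> outer_extent P v <= B rho) ->
  0 < R0 -> (0 < N)%nat ->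
  Rbar_le (area (averaged_metric (inner_extent P) (outer_extent P) B R0 N)) (3920 / INR N).
Proof.
  intros HB HR0 HN. apply area_le. intros l Hnd.
  replace (3920 / INR N) with (4 * 980 / INR N) by (unfold Rdiv; ring).
  apply (averaged_metric_area _ _ B HB R0 HR0 N HN 980 l Hnd).
  intros q Hq. apply shell_metric_area_le; auto.
  apply realized_centers_apart.
Qed.

End RealizedPattern.

Theorem lemma5p2 (V : Type) (adj : V -> V -> Prop) (Th : V -> V -> R)
  (P : V -> disk) :
  simple_graph adj -> connected_graph adj ->
  edge_weight adj Th ->
  (forall u v, adj u v -> 0 <= Th u v <= PI / 2) ->
  disk_pattern P -> realizes adj Th P ->
  locally_finite P ->
  VEL_parabolic adj.
Proof.
  intros [_ Hirrefl] Hconn _ Hangle [Hrad _] Hreal Hlf.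
  destruct (outer_extent_bound P Hrad Hlf) as [B HB].
  split; [exact Hconn|]. intros V0 HV0 _.
  destruct (finite_set_upper_bound (outer_extent P) V0 HV0) as [M HM].
  assert (HR0 : 0 < Rmax 1 M) by (generalize (Rmax_l 1 M); lra).
  apply VEL_p_infty_of_MOD_0, MOD_eq_0. intros eps Heps.
  destruct (archimed_cor1 (eps / 3920)) as (N & HNeps & HN); [lra|].
  exists (averaged_metric (inner_extent P) (outer_extent P) B (Rmax 1 M) N). split.
  - apply (averaged_metric_admissible adj Th P Hirrefl Hrad Hreal Hlf); auto.
    intros v Hv. eapply Rle_trans; [apply HM, Hv | apply Rmax_r].
  - eapply Rbar_le_trans; [now apply (averaged_metric_area_le adj Th P Hangle Hrad Hreal)|].
    simpl. unfold Rdiv. lra.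
Qed.
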